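(* Let $\mathcal{M}=(\mathcal{S},\mathcal{A},\mathcal{P},r,p_0)$ be an infinite-horizon MDP as described in the context, let $D\in\mathbb{N}$, let $\gamma_0,\dots,\gamma_D\in(0,1)$, and let $\pi$ be a stationary policy. For $d\in\{0,\dots,D\}$ let $$Q_d^\pi(s,a):=\mathbb{E}_\pi\Big[\sum_{t=0}^\infty \Phi_d(t)\, r(s_t,a_t)\,\Big|\, s_0=s,a_0=a\Big].$$ Define the operator $T_\pi^D$ on bounded functions $q:\mathcal{S}\times\mathcal{A}\to\mathbb{R}$ by $$[T_\pi^D(q)](s,a)= r_D^\pi(s,a)+\gamma_D\,\mathbb{E}_{s'\sim\mathcal{P}(s,a),\,a'\sim\pi(s')}\big[q(s',a')\big],\qquad r_D^\pi(s,a):=\mathbb{E}_{s'\sim\mathcal{P}(s,a),\,a'\sim\pi(s')}\Big[r(s,a)+\sum_{d=0}^{D-1}\gamma_d\,Q_d^\pi(s',a')\Big].$$ Then $T_\pi^D$ is a $\gamma_D$-contraction and $Q_D^\pi$ is its unique fixed point.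
   Context: $\mathcal{S}\subseteq\mathbb{R}^{k}$ and $\mathcal{A}\subseteq\mathbb{R}^{k'}$ are finite or compact sets, $\mathcal{P}:\mathcal{S}\times\mathcal{A}\to\Delta(\mathcal{S})$ is a transition kernel, $r:\mathcal{S}\times\mathcal{A}\to\mathbb{R}$ is a continuous reward function, $p_0\in\Delta(\mathcal{S})$ an initial distribution. $\mathbb{E}_\pi$ denotes expectation over trajectories $(s_t,a_t)_{t\ge0}$ with $s_{t+1}\sim\mathcal{P}(s_t,a_t)$ and $a_t\sim\pi(s_t)$ for $t\ge1$. For discount factors $\gamma_0,\dots,\gamma_D\in(0,1)$ and $d\le D$, the delayed weights are $$\Phi_d(t):=\sum_{\substack{(a_0,\dots,a_d)\in\mathbb{N}^{d+1}\\ a_0+\dots+a_d=t}}\ \prod_{i=0}^{d}\gamma_i^{a_i},\qquad t\in\mathbb{N},$$ so that $\Phi_0(t)=\gamma_0^t$. Contraction is with respect to the supremum norm. *)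

From HB Require Import structures.
From mathcomp Require Import all_boot all_order all_algebra.
From mathcomp Require Import all_classical all_reals.
From mathcomp Require Import ereal topology normedtype sequences measure.
From mathcomp Require Import lebesgue_measure lebesgue_integral kernel.

Set Implicit Arguments.
Unset Strict Implicit.
Unset Printing Implicit Defensive.
Import Order.TTheory GRing.Theory Num.Theory.
Local Open Scope ring_scope.
Local Open Scope classical_set_scope.

(* Delayed weights: Phi_d(t) = sum over (a_0,...,a_d) in N^{d+1} with
   a_0+...+a_d = t of prod_i gamma_i^{a_i}.  Since each a_i <= t, we range
   over finite functions 'I_(d+1) -> 'I_(t+1). *)
Definition Phi (R : realType) (gamma : nat -> R) (d t : nat) : R :=
  \sum_(a : {ffun 'I_d.+1 -> 'I_t.+1} | (\sum_(i < d.+1) (a i : nat))%N == t)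
     \prod_(i < d.+1) gamma (i : nat) ^+ (a i : nat).

Section mdp.
Context (R : realType) (d1 d2 : measure_display)
  (S : measurableType d1) (A : measurableType d2).

Definition next_exp (P : R.-pker (S * A)%type ~> S) (pi : R.-pker S ~> A)
    (q : S * A -> R) (sa : S * A) : R :=
  fine (\int[P sa]_s' \int[pi s']_a' (q (s', a'))%:E)%E.

(* E_pi[ r(s_t,a_t) | s_0 = s, a_0 = a ] = (next_exp^t r)(s,a) *)
Definition step_exp (P : R.-pker (S * A)%type ~> S) (pi : R.-pker S ~> A)
    (r : S * A -> R) (t : nat) : S * A -> R :=
  iter t (next_exp P pi) r.

Definition Qd (P : R.-pker (S * A)%type ~> S) (pi : R.-pker S ~> A)
    (r : S * A -> R) (gamma : nat -> R) (d : nat) (sa : S * A) : R :=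
  limn (fun n => \sum_(0 <= t < n) Phi gamma d t * step_exp P pi r t sa).

Definition rD (P : R.-pker (S * A)%type ~> S) (pi : R.-pker S ~> A)
    (r : S * A -> R) (gamma : nat -> R) (D : nat) (sa : S * A) : R :=
  next_exp P pi
    (fun sa' => r sa + \sum_(0 <= d < D) gamma d * Qd P pi r gamma d sa') sa.

Definition TD (P : R.-pker (S * A)%type ~> S) (pi : R.-pker S ~> A)
    (r : S * A -> R) (gamma : nat -> R) (D : nat) (q : S * A -> R)
    (sa : S * A) : R :=
  rD P pi r gamma D sa + gamma D * next_exp P pi q sa.

End mdp.

Definition bounded_fn (T : Type) (R : realType) (f : T -> R) : Prop :=
  exists M : R, forall x, `|f x| <= M.

Definition supnorm (T : Type) (R : realType) (f : T -> R) : R :=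
  sup [set `|f x| | x in [set: T]].

(* Write N for the one-step expectation q |-> E_{s' ~ P(s,a), a' ~ pi(s')} q(s',a').
   On bounded measurable functions N is linear, fixes constants and does not
   increase sup norms; since T q1 - T q2 = gamma_D N (q1 - q2), T is a
   gamma_D-contraction and has at most one bounded fixed point.  The generating function
   prod_(i <= d) 1 / (1 - gamma_i x) of Phi_d gives Phi_D(0) = 1,
   Phi_D(t+1) = sum_(d <= D) gamma_d Phi_d(t) and
   sum_t Phi_d(t) <= prod_(i <= d) 1 / (1 - gamma_i).  The last bound makes the
   series of Q_d converge uniformly, so N can be applied termwise, and the
   recursion turns Q_D into r + sum_(d <= D) gamma_d N Q_d, i.e. T Q_D = Q_D. *)

From HB Require Import structures.
From mathcomp Require Import all_boot all_order all_algebra.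
From mathcomp Require Import all_classical all_reals.
From mathcomp Require Import ereal topology normedtype sequences measure.
From mathcomp Require Import lebesgue_measure lebesgue_integral kernel.
From mathcomp Require Import measurable_realfun.
From mathcomp Require Import ring lra.
Import Order.TTheory GRing.Theory Num.Theory.
Import numFieldNormedType.Exports.
Local Open Scope ring_scope.
Local Open Scope classical_set_scope.

Section delayed_weights.
Context {R : realType} (g : nat -> R).

Definition trunc_geom i K : {poly R} := \poly_(a < K) (g i ^+ a).

Definition Phi_poly d K : {poly R} := \prod_(i < d.+1) trunc_geom i K.

Lemma Phi_polyE d K : Phi_poly d K =
  \sum_(f : {ffun 'I_d.+1 -> 'I_K})
     (\prod_(i < d.+1) g i ^+ f i) *: 'X^(\sum_(i < d.+1) (f i : nat)).
Proof.
rewrite /Phi_poly /trunc_geom; under eq_bigr do rewrite poly_def.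
rewrite bigA_distr_bigA /=; apply: eq_bigr => f _.
by rewrite scaler_prod prodrXr.
Qed.

Lemma Phi_coef_poly d t : Phi g d t = (Phi_poly d t.+1)`_t.
Proof.
rewrite Phi_polyE coef_sum /Phi big_mkcond /=.
apply: eq_bigr => f _; rewrite coefZ coefXn eq_sym.
by case: eqP; rewrite ?mulr1 ?mulr0.
Qed.

Lemma trunc_geomS i K : trunc_geom i K.+1 = trunc_geom i K + 'X^K * (g i ^+ K)%:P.
Proof. by rewrite /trunc_geom !poly_def big_ord_recr /= mulrC mul_polyC. Qed.

Lemma Phi_polyS d K : exists H, Phi_poly d K.+1 = Phi_poly d K + 'X^K * H.
Proof.
elim: d => [|d [H IH]].
  by exists (g 0%N ^+ K)%:P; rewrite /Phi_poly !big_ord1 trunc_geomS.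
exists (H * trunc_geom d.+1 K + Phi_poly d K * (g d.+1 ^+ K)%:P + 'X^K * H * (g d.+1 ^+ K)%:P).
rewrite /Phi_poly big_ord_recr [X in _ = X + _]big_ord_recr /= -!/(Phi_poly d _).
by rewrite IH trunc_geomS; ring.
Qed.

Lemma Phi_coef_poly_ltn d {K t} : (t < K)%N -> Phi g d t = (Phi_poly d K)`_t.
Proof.
elim: K => [//|K IH]; rewrite ltnS leq_eqVlt => /orP[/eqP<-|tK]; first exact: Phi_coef_poly.
have [H ->] := Phi_polyS d K.
by rewrite coefD coefXnM tK addr0 IH.
Qed.

Lemma Phi_geom t : Phi g 0 t = g 0%N ^+ t.
Proof. by rewrite Phi_coef_poly /Phi_poly big_ord1 coef_poly ltnSn. Qed.

Lemma PhiS d t : Phi g d.+1 t = \sum_(j < t.+1) Phi g d j * g d.+1 ^+ (t - j).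
Proof.
rewrite (Phi_coef_poly_ltn d.+1 (ltnSn t)) /Phi_poly big_ord_recr -/(Phi_poly d t.+1) coefM.
apply: eq_bigr => j _; rewrite (Phi_coef_poly_ltn d (ltn_ord j)) coef_poly.
by rewrite ltnS leq_subr.
Qed.

Lemma Phi_at0 d : Phi g d 0 = 1.
Proof.
elim: d => [|d IH]; first by rewrite Phi_geom.
by rewrite PhiS big_ord1 IH subnn mulr1.
Qed.

Lemma PhiSS d t : Phi g d.+1 t.+1 = Phi g d t.+1 + g d.+1 * Phi g d.+1 t.
Proof.
rewrite !PhiS big_ord_recr /= subnn mulr1 addrC mulr_sumr; congr (_ + _).
apply: eq_bigr => j _; rewrite subSn; last by rewrite -ltnS.
by rewrite exprS mulrCA.
Qed.

Lemma Phi_recr d t : Phi g d t.+1 = \sum_(i < d.+1) g i * Phi g i t.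
Proof.
elim: d => [|d IH]; first by rewrite big_ord1 !Phi_geom exprS.
by rewrite PhiSS IH [RHS]big_ord_recr.
Qed.

Lemma Phi_ge0 d t : (forall i, (i <= d)%N -> 0 <= g i) -> 0 <= Phi g d t.
Proof.
move=> g_ge0; apply: sumr_ge0 => f _; apply: prodr_ge0 => i _.
by rewrite exprn_ge0 // g_ge0 // -ltnS.
Qed.

End delayed_weights.

Lemma sum_geom_recr_le {R : realType} (a b : nat -> R) (c B : R) :
  0 <= c < 1 -> (forall t, 0 <= a t) ->
  a 0%N = b 0%N -> (forall t, a t.+1 = b t.+1 + c * a t) ->
  (forall n, \sum_(0 <= t < n) b t <= B) ->
  forall n, \sum_(0 <= t < n) a t <= B / (1 - c).
Proof.
move=> /andP[c_ge0 c_lt1] a_ge0 ab0 abS b_le n.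
have B_ge0 : 0 <= B by have := b_le 0%N; rewrite big_geq.
case: n => [|n]; first by rewrite big_geq // divr_ge0 // subr_ge0 ltW.
have a_split : \sum_(0 <= t < n.+1) a t =
    \sum_(0 <= t < n.+1) b t + c * \sum_(0 <= t < n) a t.
  rewrite !big_nat_recl // ab0 -addrA mulr_sumr -big_split /=.
  by congr (_ + _); apply: eq_bigr => t _; rewrite abS.
have a_mono : \sum_(0 <= t < n) a t <= \sum_(0 <= t < n.+1) a t.
  by rewrite big_nat_recr //= lerDl.
rewrite ler_pdivlMr ?subr_gt0 // mulrBr mulr1 lerBlDr mulrC.
by rewrite {1}a_split lerD // ler_wpM2l.
Qed.

Lemma sum_Phi_le {R : realType} (g : nat -> R) d n :
  (forall i, (i <= d)%N -> 0 <= g i < 1) ->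
  \sum_(0 <= t < n) Phi g d t <= \prod_(i < d.+1) (1 - g i)^-1.
Proof.
elim: d n => [|d IH] n g01.
  rewrite big_ord1 -div1r; have g0 := g01 0%N (leqnn 0).
  apply: (@sum_geom_recr_le _ _ (fun t => (t == 0%N)%:R)) => //.
  - by move=> t; rewrite Phi_geom exprn_ge0 //; case/andP: g0.
  - by rewrite Phi_at0.
  - by move=> t; rewrite !Phi_geom exprS add0r.
  case=> [|m]; first by rewrite big_geq.
  by rewrite big_nat_recl //= big1 ?addr0.
rewrite big_ord_recr /=.
apply: (@sum_geom_recr_le _ _ (Phi g d) _ _ (g01 _ (leqnn _))).
- by move=> t; apply: Phi_ge0 => i /g01 /andP[].
- by rewrite !Phi_at0.
- by move=> t; rewrite PhiSS.
by move=> m; apply: IH => i id; apply: g01; exact: leqW.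
Qed.

Lemma cvgr_dist_bound {R : realType} (u e : nat -> R) (l : R) :
  e n @[n --> \oo] --> 0 -> (forall n, `|l - u n| <= e n) -> u n @[n --> \oo] --> l.
Proof.
move=> e0 ul_le; apply/cvgrPdist_le => eps eps_gt0.
move/cvgrPdist_le : e0 => /(_ eps eps_gt0); apply: filterS => n.
by rewrite sub0r normrN; apply: le_trans; rewrite (le_trans (ul_le n)) ?ler_norm.
Qed.

Section supnorm.
Context {T : Type} {R : realType}.
Implicit Types f : T -> R.

Lemma supnorm_empty f : ~ ([set `|f x| | x in [set: T]] !=set0) -> supnorm f = 0.
Proof.
move=> empty; rewrite /supnorm (_ : [set _ | _ in _] = set0) ?sup0 //.
by apply/seteqP; split => // y Ey; exfalso; apply: empty; exists y.
Qed.

Lemma norm_le_supnorm {f} x : bounded_fn f -> `|f x| <= supnorm f.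
Proof.
by move=> [B f_le]; apply: ub_le_sup; [exists B => _ [y _ <-] | exists x].
Qed.

Lemma supnorm_ge0 {f} : bounded_fn f -> 0 <= supnorm f.
Proof.
move=> bf; have [[_ [x _ _]]|empty] := pselect ([set `|f x| | x in [set: T]] !=set0).
  exact: le_trans (normr_ge0 _) (norm_le_supnorm x bf).
by rewrite supnorm_empty.
Qed.

Lemma supnorm_le f B : 0 <= B -> (forall x, `|f x| <= B) -> supnorm f <= B.
Proof.
move=> B_ge0 f_le; have [ne|empty] := pselect ([set `|f x| | x in [set: T]] !=set0).
  by apply: ge_sup => // _ [y _ <-].
by rewrite supnorm_empty.
Qed.

Lemma supnorm_contract_eq0 {f c} : bounded_fn f -> c < 1 ->
  supnorm f <= c * supnorm f -> forall x, f x = 0.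
Proof.
move=> bf c_lt1 contract x; apply/normr0_eq0/le_anti.
rewrite normr_ge0 andbT (le_trans (norm_le_supnorm x bf)) //.
have := supnorm_ge0 bf; nra.
Qed.

End supnorm.

Section bounded_measurable.
Context {R : realType} {d : measure_display} {T : measurableType d}.
Implicit Types f g : T -> R.

Definition bounded_measurable f := measurable_fun setT f /\ bounded_fn f.

Lemma bounded_measurable_cst c : bounded_measurable (fun _ => c).
Proof. by split => //; exists `|c|. Qed.

Lemma bounded_measurableD {f g} : bounded_measurable f -> bounded_measurable g ->
  bounded_measurable (fun z => f z + g z).
Proof.
move=> [mf [Mf f_le]] [mg [Mg g_le]]; split; first exact: measurable_funD.
by exists (Mf + Mg) => z; rewrite (le_trans (ler_normD _ _)) // lerD.
Qed.

Lemma bounded_measurableZ c {f} : bounded_measurable f ->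
  bounded_measurable (fun z => c * f z).
Proof.
move=> [mf [Mf f_le]]; split; first exact: measurable_funM.
by exists (`|c| * Mf) => z; rewrite normrM ler_wpM2l.
Qed.

Lemma bounded_measurableB {f g} : bounded_measurable f -> bounded_measurable g ->
  bounded_measurable (fun z => f z - g z).
Proof.
move=> bf /(bounded_measurableZ (-1)) bg.
by under eq_fun do rewrite -mulN1r; exact: bounded_measurableD.
Qed.

Lemma bounded_measurable_sum (I : eqType) (s : seq I) (F : I -> T -> R) :
  {in s, forall i, bounded_measurable (F i)} ->
  bounded_measurable (fun z => \sum_(i <- s) F i z).
Proof.
elim: s => [|i s IH] bF.
  by under eq_fun do rewrite big_nil; exact: bounded_measurable_cst.
under eq_fun do rewrite big_cons.
apply: bounded_measurableD; first by apply: bF; rewrite mem_head.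
by apply: IH => j js; apply: bF; rewrite inE js orbT.
Qed.

End bounded_measurable.

Section kernel_integral.
Context {R : realType} {d d' : measure_display}
  {X : measurableType d} {Y : measurableType d'} (k : R.-pker X ~> Y).
Implicit Types f : X * Y -> R.

Definition kintegral f x : R := Rintegral (k x) setT (fun y => f (x, y)).

Lemma kintegrable {f} x : bounded_measurable f ->
  (k x).-integrable setT (EFin \o (fun y => f (x, y))).
Proof.
move=> [mf [M f_le]].
have cst_int : (k x).-integrable setT (EFin \o cst M).
  apply/integrableP; split; first exact/measurable_EFinP/measurable_cst.
  rewrite (eq_integral (cst `|M|%:E)) //.
  by rewrite integral_cst // prob_kernel mule1 ltry.
apply: le_integrable cst_int => //; first exact/measurable_EFinP/measurable_fun_pair2.
by move=> y _ /=; rewrite lee_fin (le_trans (f_le _)) // ler_norm.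
Qed.

Lemma kintegral_cst c x : kintegral (fun _ => c) x = c.
Proof. by rewrite /kintegral Rintegral_cst // prob_kernel mulr1. Qed.

Lemma norm_kintegral_le f M x : measurable_fun setT f -> (forall z, `|f z| <= M) ->
  `|kintegral f x| <= M.
Proof.
move=> mf f_le; rewrite /kintegral; have bf : bounded_measurable f by split => //; exists M.
have bnf : bounded_measurable (fun z => `|f z|).
  by split; [exact: measurableT_comp | exists M => z; rewrite normr_id].
apply: le_trans (le_normr_Rintegral measurableT (kintegrable x bf)) _.
rewrite -[X in _ <= X](kintegral_cst M x); apply: le_Rintegral => //.
  exact: kintegrable bnf.
exact: kintegrable (bounded_measurable_cst M).
Qed.

Lemma kintegralD f1 f2 x : bounded_measurable f1 -> bounded_measurable f2 ->
  kintegral (fun z => f1 z + f2 z) x = kintegral f1 x + kintegral f2 x.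
Proof. by move=> b1 b2; rewrite /kintegral RintegralD //; exact: kintegrable. Qed.

Lemma kintegralZ c f x : bounded_measurable f ->
  kintegral (fun z => c * f z) x = c * kintegral f x.
Proof. by move=> bf; rewrite /kintegral RintegralZl //; exact: kintegrable. Qed.

Lemma bounded_measurable_kintegral f : bounded_measurable f ->
  bounded_measurable (kintegral f).
Proof.
move=> bf; have [mf [M f_le]] := bf.
split; last by exists M => x; exact: norm_kintegral_le.
(* [measurable_fun_integral_finite_kernel] needs a nonnegative integrand,
   hence the shift by [M] *)
have -> : kintegral f = (fun x => kintegral (fun z => f z + M) x - M).
  apply/funext => x.
  by rewrite kintegralD ?kintegral_cst ?addrK //; exact: bounded_measurable_cst.
apply: measurable_funB => //; apply: measurableT_comp => //.
apply: (measurable_fun_integral_finite_kernel (fun z => (f z + M)%:E)%E k).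
  by move=> z; rewrite lee_fin -lerBlDr sub0r; have := f_le z; rewrite ler_norml => /andP[].
exact/measurable_EFinP/measurable_funD.
Qed.

End kernel_integral.

Section next_exp.
Context {R : realType} {d1 d2 : measure_display}
  {S : measurableType d1} {A : measurableType d2}
  (P : R.-pker (S * A)%type ~> S) (pi : R.-pker S ~> A).
Implicit Types q : S * A -> R.

Local Notation N := (next_exp P pi).

Lemma bounded_measurable_kintegral_snd {q} : bounded_measurable q ->
  bounded_measurable (fun z : (S * A) * S => kintegral pi q z.2).
Proof.
move=> /(bounded_measurable_kintegral pi) [mq [M q_le]].
by split; [exact: measurableT_comp | exists M].
Qed.

Lemma next_expE q : bounded_measurable q ->
  N q = kintegral P (fun z => kintegral pi q z.2).
Proof.
move=> bq; apply/funext => sa; rewrite /next_exp /kintegral /Rintegral; congr fine.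
apply: eq_integral => s' _; rewrite fineK //.
exact: integrable_fin_num (kintegrable pi _ bq).
Qed.

Lemma norm_next_exp_le q M sa : measurable_fun setT q -> (forall z, `|q z| <= M) ->
  `|N q sa| <= M.
Proof.
move=> mq q_le; have bq : bounded_measurable q by split => //; exists M.
rewrite next_expE //; apply: norm_kintegral_le => [|z].
  by case: (bounded_measurable_kintegral_snd bq).
exact: norm_kintegral_le.
Qed.

Lemma bounded_measurable_next_exp q : bounded_measurable q ->
  bounded_measurable (N q).
Proof.
move=> bq; rewrite next_expE //.
exact/bounded_measurable_kintegral/bounded_measurable_kintegral_snd.
Qed.

Lemma next_exp_cst c : N (fun _ => c) = (fun _ => c).
Proof.
rewrite next_expE; last exact: bounded_measurable_cst.
by apply/funext => sa; under eq_fun do rewrite kintegral_cst; rewrite kintegral_cst.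
Qed.

Lemma next_expD q1 q2 : bounded_measurable q1 -> bounded_measurable q2 ->
  N (fun z => q1 z + q2 z) = (fun sa => N q1 sa + N q2 sa).
Proof.
move=> b1 b2; rewrite !next_expE //; last exact: bounded_measurableD.
apply/funext => sa; under eq_fun do rewrite kintegralD //.
by rewrite kintegralD //; exact: bounded_measurable_kintegral_snd.
Qed.

Lemma next_expZ c q : bounded_measurable q ->
  N (fun z => c * q z) = (fun sa => c * N q sa).
Proof.
move=> bq; rewrite !next_expE //; last exact: bounded_measurableZ.
apply/funext => sa; under eq_fun do rewrite kintegralZ //.
by rewrite kintegralZ //; exact: bounded_measurable_kintegral_snd.
Qed.

Lemma next_expB q1 q2 : bounded_measurable q1 -> bounded_measurable q2 ->
  N (fun z => q1 z - q2 z) = (fun sa => N q1 sa - N q2 sa).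
Proof.
move=> b1 b2; under eq_fun do rewrite -mulN1r.
rewrite next_expD //; last exact: bounded_measurableZ.
by rewrite next_expZ //; under eq_fun do rewrite mulN1r.
Qed.

Lemma next_exp_sum (I : eqType) (s : seq I) (F : I -> S * A -> R) :
  {in s, forall i, bounded_measurable (F i)} ->
  N (fun z => \sum_(i <- s) F i z) = (fun sa => \sum_(i <- s) N (F i) sa).
Proof.
elim: s => [|i s IH] bF.
  under eq_fun do rewrite big_nil.
  by rewrite next_exp_cst; apply/funext => sa; rewrite big_nil.
have bFs : {in s, forall j, bounded_measurable (F j)}.
  by move=> j js; apply: bF; rewrite inE js orbT.
under eq_fun do rewrite big_cons.
rewrite next_expD ?IH //; last exact: bounded_measurable_sum.
  by apply/funext => sa; rewrite big_cons.
by apply: bF; rewrite mem_head.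
Qed.

End next_exp.

Section Bellman_operator.
Context {R : realType} {d1 d2 : measure_display}
  {S : measurableType d1} {A : measurableType d2}
  (P : R.-pker (S * A)%type ~> S) (pi : R.-pker S ~> A)
  (r : S * A -> R) (g : nat -> R) (D : nat).
Implicit Types q : S * A -> R.

Lemma TD_subE q1 q2 sa : bounded_measurable q1 -> bounded_measurable q2 ->
  TD P pi r g D q1 sa - TD P pi r g D q2 sa =
  g D * next_exp P pi (fun z => q1 z - q2 z) sa.
Proof. by move=> b1 b2; rewrite next_expB // /TD; ring. Qed.

Lemma supnorm_TD_sub_le {q1 q2} : 0 <= g D ->
  bounded_measurable q1 -> bounded_measurable q2 ->
  supnorm (fun sa => TD P pi r g D q1 sa - TD P pi r g D q2 sa)
    <= g D * supnorm (fun sa => q1 sa - q2 sa).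
Proof.
move=> gD_ge0 b1 b2; have [m12 b12] := bounded_measurableB b1 b2.
apply: supnorm_le => [|sa]; first by rewrite mulr_ge0 // supnorm_ge0.
rewrite TD_subE // normrM ger0_norm // ler_wpM2l //.
by apply: norm_next_exp_le m12 _ => z; exact: (norm_le_supnorm z b12).
Qed.

End Bellman_operator.

Section delayed_value.
Context {R : realType} {d1 d2 : measure_display}
  {S : measurableType d1} {A : measurableType d2}
  (P : R.-pker (S * A)%type ~> S) (pi : R.-pker S ~> A)
  {r : S * A -> R} {g : nat -> R} {M : R}.
Hypotheses (mr : measurable_fun setT r) (r_le : forall z, `|r z| <= M).

Local Notation N := (next_exp P pi).
Local Notation f := (step_exp P pi r).

Lemma bounded_measurable_step_exp t : bounded_measurable (f t).
Proof.
elim: t => [|t IH]; first by split => //; exists M.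
exact: bounded_measurable_next_exp.
Qed.

Lemma norm_step_exp_le t z : `|f t z| <= M.
Proof.
elim: t z => [//|t IH] z; apply: norm_next_exp_le IH.
by case: (bounded_measurable_step_exp t).
Qed.

Section fixed_delay.
Variables (d : nat) (g01 : forall i, (i <= d)%N -> 0 <= g i < 1).

Definition Phi_part n := \sum_(0 <= t < n) Phi g d t.

Definition Qd_part n sa := \sum_(0 <= t < n) Phi g d t * f t sa.

Let Phi_nonneg t : 0 <= Phi g d t.
Proof. by apply: Phi_ge0 => i /g01 /andP[]. Qed.

Lemma Phi_part_nondecreasing : nondecreasing_seq Phi_part.
Proof. by apply/nondecreasing_seqP => n; rewrite /Phi_part big_nat_recr //= lerDl. Qed.

Lemma Phi_part_cvg : cvgn Phi_part.
Proof.
apply: nondecreasing_is_cvgn; first exact: Phi_part_nondecreasing.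
by exists (\prod_(i < d.+1) (1 - g i)^-1) => _ [n _ <-]; exact: sum_Phi_le.
Qed.

Lemma norm_Qd_part_sub_le m n sa : (n <= m)%N ->
  `|Qd_part m sa - Qd_part n sa| <= M * (Phi_part m - Phi_part n).
Proof.
move=> nm; have sum_sub (F : nat -> R) :
    \sum_(0 <= t < m) F t - \sum_(0 <= t < n) F t = \sum_(n <= t < m) F t.
  by rewrite (@big_cat_nat _ _ _ n 0 m _ F (leq0n n) nm) addrC addKr.
rewrite /Qd_part /Phi_part !sum_sub mulr_sumr (le_trans (ler_norm_sum _ _ _)) //.
apply: ler_sum => t _; rewrite normrM ger0_norm // mulrC ler_wpM2r //.
exact: norm_step_exp_le.
Qed.

Lemma Qd_part_cvg sa : Qd_part n sa @[n --> \oo] --> Qd P pi r g d sa.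
Proof.
apply: (@normed_cvg _ R^o (fun t => Phi g d t * f t sa)).
apply: (@series_le_cvg _ _ (fun t => M * Phi g d t)) => [n|n|n|].
- exact: normr_ge0.
- by rewrite mulr_ge0 // (le_trans _ (norm_step_exp_le 0 sa)).
- by rewrite /= normrM ger0_norm // mulrC ler_wpM2r // norm_step_exp_le.
have -> : series (fun t => M * Phi g d t) = (fun n => M * Phi_part n).
  by apply/funext => n; rewrite /series /Phi_part /= mulr_sumr.
by apply: is_cvgMr; exact: Phi_part_cvg.
Qed.

Lemma norm_Qd_sub_part_le n sa :
  `|Qd P pi r g d sa - Qd_part n sa| <= M * (limn Phi_part - Phi_part n).
Proof.
have Qd_cvg : `|Qd_part m sa - Qd_part n sa| @[m --> \oo] -->
    `|Qd P pi r g d sa - Qd_part n sa|.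
  by apply: cvg_norm; apply: cvgB; [exact: Qd_part_cvg | exact: cvg_cst].
have lim_cvg : M * (Phi_part m - Phi_part n) @[m --> \oo] -->
    M * (limn Phi_part - Phi_part n).
  by apply: cvgMr; apply: cvgB; [exact: Phi_part_cvg | exact: cvg_cst].
apply: (ler_cvg_to Qd_cvg lim_cvg).
by near=> m; apply: norm_Qd_part_sub_le; near: m; exists n.
Unshelve. all: by end_near.
Qed.

Lemma Qd_tail_cvg0 : M * (limn Phi_part - Phi_part n) @[n --> \oo] --> 0.
Proof.
rewrite -(mulr0 M) -(subrr (limn Phi_part)).
by apply: cvgMr; apply: cvgB; [exact: cvg_cst | exact: Phi_part_cvg].
Qed.

Lemma bounded_measurable_Qd_part n : bounded_measurable (Qd_part n).
Proof.
by apply: bounded_measurable_sum => t _; apply/bounded_measurableZ/bounded_measurable_step_exp.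
Qed.

Lemma bounded_measurable_Qd : bounded_measurable (Qd P pi r g d).
Proof.
split.
  apply: (measurable_fun_cvg (h := Qd_part)) => [m|sa _]; last exact: Qd_part_cvg.
  by case: (bounded_measurable_Qd_part m).
exists (M * (limn Phi_part - Phi_part 0)) => sa.
by have := norm_Qd_sub_part_le 0 sa; rewrite /Qd_part big_geq // subr0.
Qed.

Lemma next_exp_Qd_cvg sa :
  \sum_(0 <= t < n) Phi g d t * f t.+1 sa @[n --> \oo] --> N (Qd P pi r g d) sa.
Proof.
apply: cvgr_dist_bound Qd_tail_cvg0 _ => n.
have -> : \sum_(0 <= t < n) Phi g d t * f t.+1 sa = N (Qd_part n) sa.
  rewrite next_exp_sum => [|t _]; last exact/bounded_measurableZ/bounded_measurable_step_exp.
  by apply: eq_bigr => t _; rewrite next_expZ //; exact: bounded_measurable_step_exp.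
have bQ := bounded_measurable_Qd; have bQn := bounded_measurable_Qd_part n.
rewrite (_ : _ - _ = N (fun z => Qd P pi r g d z - Qd_part n z) sa); last by rewrite next_expB.
have [mB _] := bounded_measurableB bQ bQn.
exact: norm_next_exp_le mB (norm_Qd_sub_part_le n).
Qed.

End fixed_delay.

Section fixed_point.
Context {D : nat}.
Hypothesis g01 : forall i, (i <= D)%N -> 0 <= g i < 1.

Lemma bounded_measurable_Qd_le {d} : (d <= D)%N -> bounded_measurable (Qd P pi r g d).
Proof.
by move=> dD; apply: bounded_measurable_Qd => i id; apply: g01; exact: leq_trans dD.
Qed.

Lemma rDE sa : rD P pi r g D sa = r sa + \sum_(0 <= d < D) g d * N (Qd P pi r g d) sa.
Proof.
have bQ d : d \in index_iota 0 D -> bounded_measurable (Qd P pi r g d).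
  by rewrite mem_index_iota => /andP[_ /ltnW]; exact: bounded_measurable_Qd_le.
rewrite /rD next_expD; [|exact: bounded_measurable_cst|].
  rewrite next_exp_cst next_exp_sum => [|d /bQ]; last exact: bounded_measurableZ.
  by congr (_ + _); apply: eq_big_seq => d /bQ bQd; rewrite next_expZ.
by apply: bounded_measurable_sum => d /bQ; exact: bounded_measurableZ.
Qed.

Lemma Qd_recr sa :
  Qd P pi r g D sa = r sa + \sum_(d < D.+1) g d * N (Qd P pi r g d) sa.
Proof.
pose shifted d n := \sum_(0 <= t < n) Phi g d t * f t.+1 sa.
have part_recr n : Qd_part D n.+1 sa = r sa + \sum_(d < D.+1) g d * shifted d n.
  rewrite /Qd_part big_nat_recl // Phi_at0 mul1r; congr (_ + _).
  under [RHS]eq_bigr do rewrite mulr_sumr.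
  rewrite exchange_big /=; apply: eq_bigr => t _.
  rewrite Phi_recr big_distrl /=; apply: eq_bigr => d _.
  by rewrite mulrA.
have part_cvg : r sa + \sum_(d < D.+1) g d * shifted d n @[n --> \oo] -->
    Qd P pi r g D sa.
  by under eq_fun do rewrite -part_recr; have := Qd_part_cvg D g01 sa; rewrite -cvg_shiftS.
have shifted_cvg : r sa + \sum_(d < D.+1) g d * shifted d n @[n --> \oo] -->
    r sa + \sum_(d < D.+1) g d * N (Qd P pi r g d) sa.
  apply: cvgD; first exact: cvg_cst.
  apply: cvg_big => [|d _]; first exact: add_continuous.
  apply: cvgMr; apply: next_exp_Qd_cvg => i id.
  by apply: g01; rewrite (leq_trans id) // -ltnS.
exact: cvg_unique part_cvg shifted_cvg.
Qed.

Lemma TD_Qd : TD P pi r g D (Qd P pi r g D) = Qd P pi r g D.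
Proof. by apply/funext => sa; rewrite /TD rDE [RHS]Qd_recr big_ord_recr big_mkord addrA. Qed.

Lemma bounded_measurable_TD q : bounded_measurable q ->
  bounded_measurable (TD P pi r g D q).
Proof.
move=> bq; have -> : TD P pi r g D q = (fun sa =>
    (r sa + \sum_(0 <= d < D) g d * N (Qd P pi r g d) sa) + g D * N q sa).
  by apply/funext => sa; rewrite /TD rDE.
apply: bounded_measurableD; last exact/bounded_measurableZ/bounded_measurable_next_exp.
apply: bounded_measurableD; first by split => //; exists M.
apply: bounded_measurable_sum => d; rewrite mem_index_iota => /andP[_ /ltnW dD].
exact/bounded_measurableZ/bounded_measurable_next_exp/bounded_measurable_Qd_le.
Qed.

End fixed_point.

End delayed_value.

Theorem proposition1 (R : realType) (d1 d2 : measure_display)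
  (S : measurableType d1) (A : measurableType d2)
  (P : R.-pker (S * A)%type ~> S) (r : S * A -> R)
  (pi : R.-pker S ~> A) (D : nat) (gamma : nat -> R) :
  measurable_fun [set: S * A] r -> bounded_fn r ->
  (forall d, (d <= D)%N -> 0 < gamma d < 1) ->
  (* T_pi^D maps bounded measurable functions to bounded measurable functions *)
  (forall q : S * A -> R, measurable_fun [set: S * A] q -> bounded_fn q ->
     measurable_fun [set: S * A] (TD P pi r gamma D q) /\
     bounded_fn (TD P pi r gamma D q)) /\
  (* gamma_D-contraction in the supremum norm *)
  (forall q1 q2 : S * A -> R,
     measurable_fun [set: S * A] q1 -> bounded_fn q1 ->
     measurable_fun [set: S * A] q2 -> bounded_fn q2 ->
     supnorm (fun sa => TD P pi r gamma D q1 sa - TD P pi r gamma D q2 sa)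
       <= gamma D * supnorm (fun sa => q1 sa - q2 sa)) /\
  (* Q_D^pi is a (bounded measurable) fixed point ... *)
  (measurable_fun [set: S * A] (Qd P pi r gamma D) /\
   bounded_fn (Qd P pi r gamma D) /\
   TD P pi r gamma D (Qd P pi r gamma D) = Qd P pi r gamma D) /\
  (* ... and the unique one *)
  (forall q : S * A -> R, measurable_fun [set: S * A] q -> bounded_fn q ->
     TD P pi r gamma D q = q -> q = Qd P pi r gamma D).
Proof.
move=> mr [M r_le] gamma01.
have g01 i : (i <= D)%N -> 0 <= gamma i < 1 by move/gamma01/andP => [/ltW -> ->].
have /andP[gD_ge0 gD_lt1] := g01 D (leqnn D).
have [mQ bQ] := bounded_measurable_Qd_le P pi mr r_le g01 (leqnn D).
have TD_fix := TD_Qd P pi mr r_le g01.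
split; [|split; [|split]].
- by move=> q mq bq; apply: (bounded_measurable_TD P pi mr r_le g01).
- by move=> q1 q2 m1 b1 m2 b2; apply: supnorm_TD_sub_le.
- by [].
move=> q mq bq Tq; apply/funext => sa; apply: subr0_eq.
have [_ bdiff] := bounded_measurableB (conj mq bq) (conj mQ bQ).
apply: (supnorm_contract_eq0 bdiff gD_lt1 _ sa).
have := supnorm_TD_sub_le P pi r gamma D gD_ge0 (conj mq bq) (conj mQ bQ).
by rewrite Tq TD_fix.
Qed.
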